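(* For every sufficiently large prime $N$ and every $\mu$ with $N^{-1/2}\log^2N\le\mu<1$, there is a set $T$ of residues modulo $N$ such that $|f_T|\le\mu$ and $$|T|=O\left(\frac{L_1^2}{\mu^2}\cdot\frac{1+\log(1/\mu)}{L_2+\log(1/\mu)}\right),$$ with an absolute implied constant.
   Context: $L_1=\log N$, $L_2=\log\log N$. For a set $T$ of residues modulo $N$, $f_T(k)=\sum_{t\in T}e^{2\pi ikt/N}$ and $|f_T|=\frac1{|T|}\max_{1\le k\le N-1}|f_T(k)|$. *)

From mathcomp Require Import all_boot.
From Stdlib Require Import Reals.

Set Implicit Arguments.
Unset Strict Implicit.
Unset Printing Implicit Defensive.

(* Real and imaginary parts of f_T(k) = sum_{t in T} e^{2 pi i k t / N}. *)
Definition fT_re (N : nat) (T : {set 'I_N}) (k : nat) : R :=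
  \big[Rplus/0%R]_(t in T) cos (2 * PI * INR k * INR t / INR N).

Definition fT_im (N : nat) (T : {set 'I_N}) (k : nat) : R :=
  \big[Rplus/0%R]_(t in T) sin (2 * PI * INR k * INR t / INR N).

Definition fT_abs (N : nat) (T : {set 'I_N}) (k : nat) : R :=
  sqrt (fT_re T k ^ 2 + fT_im T k ^ 2).

(* |f_T| = (1/|T|) max_{1 <= k <= N-1} |f_T(k)|  (the moduli are >= 0,
   so starting the max at 0 does not change it). *)
Definition fT_norm (N : nat) (T : {set 'I_N}) : R :=
  / INR #|T| * \big[Rmax/0%R]_(1 <= k < N) fT_abs T k.

(* Choose each residue independently with probability [s / N], where
   [s = 384 log N / mu^2].  For [0 < k < N] the full sums of [cos (2 pi k t / N)]
   and [sin (2 pi k t / N)] over all residues vanish, so the real and imaginary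
   parts of [f_T(k)] are sums of independent, centred, bounded variables; the
   exponential-moment (Chernoff) bound makes each exceed [mu s / 4] with
   probability at most [2 N^-3], and [|T|] leaves [(s/2, 3s/2)] with probability
   at most [2 exp (-s/32)].  A union bound over these [4N + 2] events leaves a
   good [T], whose size [O (log N / mu^2)] is within the stated bound because
   [(1 + log (1/mu)) / (log log N + log (1/mu)) >= 1 / log N]. *)

From HB Require Import structures.
From mathcomp Require Import all_boot.
From Stdlib Require Import Reals Lra Psatz Classical.

Set Implicit Arguments.
Unset Strict Implicit.
Unset Printing Implicit Defensive.

Lemma RplusA : associative Rplus. Proof. by move=> *; ring. Qed.
Lemma RmultA : associative Rmult. Proof. by move=> *; ring. Qed.
HB.instance Definition _ :=
  Monoid.isComLaw.Build R 0%R Rplus RplusA Rplus_comm Rplus_0_l.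
HB.instance Definition _ :=
  Monoid.isComLaw.Build R 1%R Rmult RmultA Rmult_comm Rmult_1_l.
HB.instance Definition _ := Monoid.isMulLaw.Build R 0%R Rmult Rmult_0_l Rmult_0_r.
HB.instance Definition _ :=
  Monoid.isAddLaw.Build R Rmult Rplus Rmult_plus_distr_r Rmult_plus_distr_l.

Local Open Scope R_scope.

Lemma exp_big_sum I (r : seq I) (P : pred I) (F : I -> R) :
  exp (\big[Rplus/0]_(i <- r | P i) F i) = \big[Rmult/1]_(i <- r | P i) exp (F i).
Proof. by apply: (big_morph exp) => [x y|]; [exact: exp_plus | exact: exp_0]. Qed.

Lemma big_sum_const (I : finType) (c : R) : \big[Rplus/0]_(i : I) c = INR #|I| * c.
Proof.
rewrite big_const; elim: #|I| => [|n IH] /=; first ring.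
by rewrite IH; case: n {IH} => [|n] /=; ring.
Qed.

Lemma big_sum_le I (r : seq I) (P : pred I) (F G : I -> R) :
  (forall i, P i -> F i <= G i) ->
  \big[Rplus/0]_(i <- r | P i) F i <= \big[Rplus/0]_(i <- r | P i) G i.
Proof.
move=> FG; apply: (big_ind2 (fun x y => x <= y)) => //; first lra.
by move=> *; lra.
Qed.

Lemma big_sum_ge0 I (r : seq I) (P : pred I) (F : I -> R) :
  (forall i, P i -> 0 <= F i) -> 0 <= \big[Rplus/0]_(i <- r | P i) F i.
Proof.
move=> F0; apply: (big_ind (fun x => 0 <= x)) => //; first lra.
by move=> *; lra.
Qed.

Lemma big_prod_le I (r : seq I) (P : pred I) (F G : I -> R) :
  (forall i, P i -> 0 <= F i <= G i) ->
  0 <= \big[Rmult/1]_(i <- r | P i) F i <= \big[Rmult/1]_(i <- r | P i) G i.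
Proof.
move=> FG; apply: (big_ind2 (fun x y => 0 <= x <= y)) => //; first lra.
move=> x1 x2 y1 y2 [? ?] [? ?]; split; first nra.
by apply: Rmult_le_compat; lra.
Qed.

Lemma big_sum_term_le (I : finType) (F : I -> R) (i : I) :
  (forall j, 0 <= F j) -> F i <= \big[Rplus/0]_(j : I) F j.
Proof.
move=> F0; rewrite (bigD1 i) //=.
have : 0 <= \big[Rplus/0]_(j | j != i) F j by exact: big_sum_ge0.
lra.
Qed.

Lemma big_sum_lt_exists (I : finType) (F G : I -> R) :
  \big[Rplus/0]_(i : I) F i < \big[Rplus/0]_(i : I) G i -> exists i, F i < G i.
Proof.
move=> FG; apply: NNPP => noFG.
have : \big[Rplus/0]_(i : I) G i <= \big[Rplus/0]_(i : I) F i.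
  by apply: big_sum_le => i _; apply: Rnot_lt_le => ?; apply: noFG; exists i.
lra.
Qed.
Lemma exp_le_quadratic y : Rabs y <= /2 -> exp y <= 1 + y + 2 * y ^ 2.
Proof.
move=> y_small.
have y_range : -/2 <= y <= /2 by split_Rabs; lra.
have exp_y_pos := exp_pos y.
have exp_yN : exp y * exp (- y) = 1 by rewrite -exp_plus Rplus_opp_r exp_0.
(* From [1 - y <= exp (- y)], multiply by [exp y] and divide by [1 - y]. *)
have : exp y * (1 - y) <= 1.
  by rewrite -exp_yN; apply: Rmult_le_compat_l; have := exp_ineq1_le (- y); lra.
have : 1 <= (1 - y) * (1 + y + 2 * y ^ 2) by nra.
nra.
Qed.

Lemma bernoulli_mgf_le p l c : 0 <= p <= 1 -> 0 <= l <= /2 -> Rabs c <= 1 ->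
  p * exp (l * ((1 - p) * c)) + (1 - p) * exp (l * ((0 - p) * c))
  <= exp (2 * l ^ 2 * p).
Proof.
move=> p01 l_small c_le1.
have c_range : -1 <= c <= 1 by split_Rabs; lra.
have up1 : exp (l * ((1 - p) * c))
           <= 1 + l * ((1 - p) * c) + 2 * (l * ((1 - p) * c)) ^ 2.
  apply: exp_le_quadratic; rewrite !Rabs_mult (Rabs_pos_eq l) ?(Rabs_pos_eq (1 - p)); try lra.
  have : Rabs c * (1 - p) <= 1 by nra.
  nra.
have up0 : exp (l * ((0 - p) * c))
           <= 1 + l * ((0 - p) * c) + 2 * (l * ((0 - p) * c)) ^ 2.
  apply: exp_le_quadratic.
  rewrite !Rabs_mult (Rabs_pos_eq l) ?Rminus_0_l ?Rabs_Ropp ?(Rabs_pos_eq p); try lra.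
  have : p * Rabs c <= 1 by nra.
  nra.
(* The linear terms cancel in the mean; the quadratic ones add up to [2 l^2 c^2 p (1 - p)]. *)
have : p * exp (l * ((1 - p) * c)) + (1 - p) * exp (l * ((0 - p) * c))
       <= 1 + 2 * l ^ 2 * c ^ 2 * (p * (1 - p)).
  have mean : p * (1 + l * ((1 - p) * c) + 2 * (l * ((1 - p) * c)) ^ 2)
      + (1 - p) * (1 + l * ((0 - p) * c) + 2 * (l * ((0 - p) * c)) ^ 2)
      = 1 + 2 * l ^ 2 * c ^ 2 * (p * (1 - p)) by ring.
  rewrite -mean; apply: Rplus_le_compat; apply: Rmult_le_compat_l; lra.
have : 2 * l ^ 2 * c ^ 2 * (p * (1 - p)) <= 2 * l ^ 2 * p.
  have c2_le1 : c ^ 2 <= 1 by nra.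
  have : c ^ 2 * (p * (1 - p)) <= p by nra.
  have : 0 <= l ^ 2 by nra.
  nra.
have := exp_ineq1_le (2 * l ^ 2 * p).
lra.
Qed.

Definition b2r (b : bool) : R := if b then 1 else 0.

Section BernoulliSubsets.

Variables (N : nat) (p : R).
Hypothesis p01 : 0 <= p <= 1.

Definition weight (w : {ffun 'I_N -> bool}) : R :=
  \big[Rmult/1]_(t : 'I_N) (if w t then p else 1 - p).

Definition expect (X : {ffun 'I_N -> bool} -> R) : R :=
  \big[Rplus/0]_(w : {ffun 'I_N -> bool}) (weight w * X w).

Definition deviation (c : 'I_N -> R) (w : {ffun 'I_N -> bool}) : R :=
  \big[Rplus/0]_(t : 'I_N) ((b2r (w t) - p) * c t).

Lemma weight_ge0 w : 0 <= weight w.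
Proof.
apply: (big_ind (fun x => 0 <= x)); [lra | by move=> *; nra |].
by move=> t _; case: (w t); lra.
Qed.

Lemma expect1 : expect (fun=> 1) = 1.
Proof.
rewrite /expect (eq_bigr _ (fun w _ => Rmult_1_r (weight w))) /weight.
rewrite -(bigA_distr_bigA (fun (t : 'I_N) (b : bool) => if b then p else 1 - p)).
by rewrite big1 // => t _; rewrite big_bool /=; ring.
Qed.

Lemma expectD X Y : expect (fun w => X w + Y w) = expect X + expect Y.
Proof.
by rewrite /expect -big_split; apply: eq_bigr => w _; rewrite Rmult_plus_distr_l.
Qed.

Lemma expect_sum (I : finType) (F : I -> {ffun 'I_N -> bool} -> R) :
  expect (fun w => \big[Rplus/0]_(i : I) F i w) = \big[Rplus/0]_(i : I) expect (F i).
Proof.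
rewrite /expect (eq_bigr (fun w => \big[Rplus/0]_(i : I) (weight w * F i w))) //.
  by rewrite exchange_big.
by move=> w _; rewrite big_distrr.
Qed.

Lemma expect_lt1_exists X : expect X < 1 -> exists w, X w < 1.
Proof.
rewrite -{1}expect1 => /big_sum_lt_exists [w /= lt_w]; exists w.
have w_pos : 0 < weight w.
  by case: (weight_ge0 w) => // w0; rewrite -w0 in lt_w; lra.
by apply: (Rmult_lt_reg_l (weight w)); lra.
Qed.

Lemma deviationN c w : deviation (fun t => - c t) w = - deviation c w.
Proof.
rewrite /deviation (big_morph Ropp Ropp_plus_distr Ropp_0).
by apply: eq_bigr => t _; ring.
Qed.

Lemma deviationE c w : deviation c w =
  \big[Rplus/0]_(t in [set t | w t]) c t - p * \big[Rplus/0]_(t : 'I_N) c t.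
Proof.
have -> : \big[Rplus/0]_(t in [set t | w t]) c t
          = \big[Rplus/0]_(t : 'I_N) (b2r (w t) * c t).
  by rewrite big_mkcond; apply: eq_bigr => t _; rewrite inE /b2r; case: (w t); ring.
rewrite /deviation big_distrr /Rminus (big_morph Ropp Ropp_plus_distr Ropp_0).
by rewrite -big_split; apply: eq_bigr => t _ /=; ring.
Qed.

Lemma expect_exp_deviation_le c l : 0 <= l <= /2 -> (forall t, Rabs (c t) <= 1) ->
  expect (fun w => exp (l * deviation c w)) <= exp (2 * l ^ 2 * p * INR N).
Proof.
move=> l_small c_le1.
pose F t (b : bool) := (if b then p else 1 - p) * exp (l * ((b2r b - p) * c t)).
have -> : expect (fun w => exp (l * deviation c w))
          = \big[Rplus/0]_(w : {ffun 'I_N -> bool}) \big[Rmult/1]_(t : 'I_N) F t (w t).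
  apply: eq_bigr => w _.
  by rewrite /deviation big_distrr /= exp_big_sum /weight -big_split.
(* The coordinates are independent: the sum over [w] of a product factorises. *)
rewrite -(bigA_distr_bigA F).
have -> : 2 * l ^ 2 * p * INR N = \big[Rplus/0]_(t : 'I_N) (2 * l ^ 2 * p).
  by rewrite big_sum_const card_ord; ring.
rewrite exp_big_sum; apply big_prod_le => t _; rewrite big_bool /F /=; split.
  by have := exp_pos (l * ((1 - p) * c t)); have := exp_pos (l * ((0 - p) * c t)); nra.
exact: bernoulli_mgf_le.
Qed.

Lemma expect_exp_tail_le c l a : 0 <= l <= /2 -> (forall t, Rabs (c t) <= 1) ->
  expect (fun w => exp (l * (deviation c w - a)))
  <= exp (2 * l ^ 2 * p * INR N - l * a).
Proof.
move=> l_small c_le1.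
rewrite /Rminus exp_plus.
have -> : expect (fun w => exp (l * (deviation c w + - a)))
          = expect (fun w => exp (l * deviation c w)) * exp (- (l * a)).
  rewrite /expect big_distrl /=; apply: eq_bigr => w _ /=.
  by rewrite Rmult_assoc -exp_plus; congr (_ * exp _); ring.
apply: Rmult_le_compat_r; first exact: Rlt_le (exp_pos _).
exact: expect_exp_deviation_le.
Qed.

Lemma expect_two_sided_tail_le c l a : 0 <= l <= /2 -> (forall t, Rabs (c t) <= 1) ->
  expect (fun w => exp (l * (deviation c w - a)) + exp (l * (- deviation c w - a)))
  <= 2 * exp (2 * l ^ 2 * p * INR N - l * a).
Proof.
move=> l_small c_le1; rewrite expectD.
have cN_le1 t : Rabs (- c t) <= 1 by rewrite Rabs_Ropp.
have := expect_exp_tail_le a l_small c_le1.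
have := expect_exp_tail_le a l_small cN_le1.
have -> : expect (fun w => exp (l * (deviation (fun t => - c t) w - a)))
          = expect (fun w => exp (l * (- deviation c w - a))).
  by apply: eq_bigr => w _; rewrite deviationN.
lra.
Qed.

End BernoulliSubsets.

Lemma big_sum1_card (I : finType) (A : {pred I}) :
  \big[Rplus/0]_(i in A) 1 = INR #|A|.
Proof.
rewrite -sum1_card; apply: esym; apply: (big_morph INR) => // x y.
exact: plus_INR.
Qed.

Lemma Rabs_lt_of_exp_tails l x a : 0 < l ->
  exp (l * (x - a)) + exp (l * (- x - a)) < 1 -> Rabs x < a.
Proof.
move=> l_pos tails_lt1.
have neg_of_exp_lt1 y : exp (l * y) < 1 -> y < 0.
  by rewrite -exp_0 => /exp_lt_inv; nra.
have := exp_pos (l * (x - a)); have := exp_pos (l * (- x - a)) => ? ?.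
by apply: Rabs_def1; [have := neg_of_exp_lt1 (x - a) | have := neg_of_exp_lt1 (- x - a)]; lra.
Qed.

Lemma exists_concentrated_subset (N : nat) (I : finType) (c : I -> 'I_N -> R) s eps :
  0 < s <= INR N -> 0 < eps <= 2 -> (forall i t, Rabs (c i t) <= 1) ->
  2 * INR #|I| * exp (- (eps ^ 2 * s / 8)) + 2 * exp (- (s / 32)) < 1 ->
  exists T : {set 'I_N}, Rabs (INR #|T| - s) < s / 2 /\
    forall i, Rabs (\big[Rplus/0]_(t in T) c i t
                    - s / INR N * \big[Rplus/0]_(t : 'I_N) c i t) < eps * s.
Proof.
move=> s_range eps_range c_le1 failure_lt1.
pose p := s / INR N.
have p01 : 0 <= p <= 1.
  split; first by apply: Rlt_le; apply: Rdiv_lt_0_compat; lra.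
  by apply: (Rmult_le_reg_r (INR N)); rewrite /p; [lra | field_simplify; lra].
have pN : p * INR N = s by rewrite /p; field; lra.
pose tails (d : 'I_N -> R) l a w :=
  exp (l * (deviation p d w - a)) + exp (l * (- deviation p d w - a)).
pose one (t : 'I_N) := 1.
have tails_ge0 d l a w : 0 <= tails d l a w.
  have := exp_pos (l * (deviation p d w - a)).
  by have := exp_pos (l * (- deviation p d w - a)); rewrite /tails; lra.
have [w tails_w] : exists w, \big[Rplus/0]_(i : I) tails (c i) (eps / 4) (eps * s) w
                            + tails one (/8) (s / 2) w < 1.
  apply: (expect_lt1_exists p01); rewrite expectD expect_sum.
  have tail_c i : expect p (tails (c i) (eps / 4) (eps * s)) <= 2 * exp (- (eps ^ 2 * s / 8)).
    apply: Rle_trans (expect_two_sided_tail_le p01 _ _ (c_le1 i)) _; first lra.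
    by right; congr (2 * exp _); rewrite Rmult_assoc pN; field.
  have tail_one : expect p (tails one (/8) (s / 2)) <= 2 * exp (- (s / 32)).
    have one_le1 t : Rabs (one t) <= 1 by rewrite /one Rabs_R1; lra.
    apply: Rle_trans (expect_two_sided_tail_le p01 _ _ one_le1) _; first lra.
    by right; congr (2 * exp _); rewrite Rmult_assoc pN; field.
  have tails_c := @big_sum_le I (index_enum I) xpredT _ _ (fun i _ => tail_c i).
  rewrite big_sum_const in tails_c.
  by apply: Rle_lt_trans (Rplus_le_compat _ _ _ _ tails_c tail_one) _; lra.
have tails_c_ge0 : 0 <= \big[Rplus/0]_(i : I) tails (c i) (eps / 4) (eps * s) w.
  by apply: big_sum_ge0 => i _; exact: tails_ge0.
have tails_one_ge0 := tails_ge0 one (/8) (s / 2) w.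
exists [set t | w t]; split.
  have tails_one_lt1 : tails one (/8) (s / 2) w < 1 by lra.
  have := Rabs_lt_of_exp_tails (ltac:(lra) : 0 < /8) tails_one_lt1.
  by rewrite deviationE /one big_sum1_card big_sum_const card_ord Rmult_1_r pN.
move=> i; rewrite -deviationE.
have tails_c_le : tails (c i) (eps / 4) (eps * s) w
                  <= \big[Rplus/0]_(j : I) tails (c j) (eps / 4) (eps * s) w.
  exact: big_sum_term_le i (fun j => tails_ge0 (c j) (eps / 4) (eps * s) w).
have tails_c_lt1 : tails (c i) (eps / 4) (eps * s) w < 1 by lra.
exact: Rabs_lt_of_exp_tails (ltac:(lra) : 0 < eps / 4) tails_c_lt1.
Qed.

Lemma sum_cos_telescope a n :
  2 * sin (a / 2) * \big[Rplus/0]_(t : 'I_n) cos (a * INR t)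
  = sin (a * (INR n - /2)) + sin (a / 2).
Proof.
elim: n => [|n IH].
  rewrite big_ord0 /=; replace (a * (0 - /2)) with (- (a / 2)) by field.
  by rewrite sin_neg; ring.
rewrite big_ord_recr Rmult_plus_distr_l IH S_INR /=.
replace (a * (INR n + 1 - / 2)) with (a * INR n + a / 2) by field.
replace (a * (INR n - / 2)) with (a * INR n - a / 2) by field.
by rewrite sin_plus sin_minus; ring.
Qed.

Lemma sum_sin_telescope a n :
  2 * sin (a / 2) * \big[Rplus/0]_(t : 'I_n) sin (a * INR t)
  = cos (a / 2) - cos (a * (INR n - /2)).
Proof.
elim: n => [|n IH].
  rewrite big_ord0 /=; replace (a * (0 - /2)) with (- (a / 2)) by field.
  by rewrite cos_neg; ring.
rewrite big_ord_recr Rmult_plus_distr_l IH S_INR /=.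
replace (a * (INR n + 1 - / 2)) with (a * INR n + a / 2) by field.
replace (a * (INR n - / 2)) with (a * INR n - a / 2) by field.
by rewrite cos_plus cos_minus; ring.
Qed.

Lemma sum_cos_sin_freq_eq0 (N k : nat) : (0 < k < N)%nat ->
  \big[Rplus/0]_(t : 'I_N) cos (2 * PI * INR k * INR t / INR N) = 0 /\
  \big[Rplus/0]_(t : 'I_N) sin (2 * PI * INR k * INR t / INR N) = 0.
Proof.
move=> /andP [k_pos k_ltN].
have N_pos : 0 < INR N by apply: lt_0_INR; apply/ltP; exact: ltn_trans k_ltN.
have k_pos' : 0 < INR k by apply: lt_0_INR; apply/ltP.
have k_ltN' : INR k < INR N by apply: lt_INR; apply/ltP.
pose a := 2 * PI * INR k / INR N.
have sum_angleE (f : R -> R) :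
    \big[Rplus/0]_(t : 'I_N) f (2 * PI * INR k * INR t / INR N)
    = \big[Rplus/0]_(t : 'I_N) f (a * INR t).
  by apply: eq_bigr => t _; congr f; rewrite /a; field; lra.
have sin_half_neq0 : sin (a / 2) <> 0.
  have -> : a / 2 = PI * (INR k / INR N) by rewrite /a; field; lra.
  have : INR k / INR N < 1 by apply: (Rmult_lt_reg_r (INR N)); [lra | field_simplify; lra].
  have : 0 < INR k / INR N by apply: Rdiv_lt_0_compat.
  by move=> ? ?; apply: Rgt_not_eq; apply: sin_gt_0; have := PI_RGT_0; nra.
(* Over a full period the endpoint [a (N - 1/2)] is [-a/2] up to a multiple of [2 pi]. *)
have endE : a * (INR N - /2) = - (a / 2) + 2 * INR k * PI by rewrite /a; field; lra.
have := sum_cos_telescope a N; have := sum_sin_telescope a N.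
rewrite endE cos_period sin_period cos_neg sin_neg.
move=> sinE cosE; rewrite (sum_angleE cos) (sum_angleE sin).
split; apply: (Rmult_eq_reg_l (2 * sin (a / 2))).
- by rewrite cosE; ring.
- by apply: Rmult_integral_contrapositive_currified; lra.
- by rewrite sinE; ring.
- by apply: Rmult_integral_contrapositive_currified; lra.
Qed.

Lemma sqrt_sum_sq_le x y m : Rabs x <= m -> Rabs y <= m -> sqrt (x ^ 2 + y ^ 2) <= 2 * m.
Proof.
move=> x_le y_le; have m_ge0 : 0 <= m by have := Rabs_pos x; lra.
rewrite -(sqrt_pow2 (2 * m)); last lra.
apply: sqrt_le_1_alt; rewrite -(pow2_abs x) -(pow2_abs y).
by have := Rabs_pos x; have := Rabs_pos y; nra.
Qed.

Definition fourier_coef (N : nat) (kb : 'I_N * bool) (t : 'I_N) : R :=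
  if kb.2 then cos (2 * PI * INR kb.1 * INR t / INR N)
  else sin (2 * PI * INR kb.1 * INR t / INR N).

Lemma exists_small_fourier_set (N : nat) s eps :
  0 < s <= INR N -> 0 < eps <= 2 ->
  4 * INR N * exp (- (eps ^ 2 * s / 8)) + 2 * exp (- (s / 32)) < 1 ->
  exists T : {set 'I_N}, Rabs (INR #|T| - s) < s / 2 /\
    forall k, (0 < k < N)%nat -> fT_abs T k <= 2 * eps * s.
Proof.
move=> s_range eps_range failure_lt1.
have coef_le1 kb t : Rabs (@fourier_coef N kb t) <= 1.
  by rewrite /fourier_coef; case: kb.2; apply: Rabs_le; [exact: COS_bound | exact: SIN_bound].
have failure_lt1' :
    2 * INR #|{: 'I_N * bool}| * exp (- (eps ^ 2 * s / 8)) + 2 * exp (- (s / 32)) < 1.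
  rewrite card_prod card_ord card_bool mult_INR.
  by have -> : INR 2 = 2 by []; lra.
have [T [sizeT coefT]] :=
  exists_concentrated_subset s_range eps_range coef_le1 failure_lt1'.
exists T; split => // k k_range; have [cos0 sin0] := sum_cos_sin_freq_eq0 k_range.
have k_ltN : (k < N)%nat by case/andP: k_range.
have := coefT (Ordinal k_ltN, true); have := coefT (Ordinal k_ltN, false).
rewrite /fourier_coef /= cos0 sin0 Rmult_0_r !Rminus_0_r => im re.
by rewrite Rmult_assoc; apply: sqrt_sum_sq_le; apply: Rlt_le.
Qed.

Lemma fT_norm_le (N : nat) (T : {set 'I_N}) m : (0 < #|T|)%nat -> 0 <= m ->
  (forall k, (0 < k < N)%nat -> fT_abs T k <= m * INR #|T|) -> fT_norm T <= m.
Proof.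
move=> T_pos m_ge0 abs_le.
have T_pos' : 0 < INR #|T| by apply: lt_0_INR; apply/ltP.
have max_le : \big[Rmax/0]_(1 <= k < N) fT_abs T k <= m * INR #|T|.
  rewrite big_nat_cond; apply: (big_ind (fun x => x <= m * INR #|T|)).
  - by apply: Rmult_le_pos; lra.
  - by move=> x y; apply: Rmax_lub.
  - by move=> k /andP [k_range _]; exact: abs_le.
apply: (Rle_trans _ (/ INR #|T| * (m * INR #|T|))).
  by apply: Rmult_le_compat_l => //; apply/Rlt_le/Rinv_0_lt_compat.
by right; field; lra.
Qed.

Lemma exp_le_exp x y : x <= y -> exp x <= exp y.
Proof. by case=> [/exp_increasing /Rlt_le | ->]; [| exact: Rle_refl]. Qed.

Lemma le_ln_of_exp_le a x : 0 < x -> exp a <= x -> a <= ln x.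
Proof.
move=> x_pos exp_le; apply: Rnot_lt_le => lt_a.
by have := exp_increasing _ _ lt_a; rewrite exp_ln //; lra.
Qed.

Lemma ln_ge8 x : 6561 <= x -> 8 <= ln x.
Proof.
move=> x_large; apply: le_ln_of_exp_le; first lra.
have -> : exp 8 = exp 1 ^ 8.
  have -> : (8 : R) = 1 + 1 + 1 + 1 + 1 + 1 + 1 + 1 by ring.
  by rewrite !exp_plus /=; ring.
have : exp 1 ^ 8 <= 3 ^ 8 by apply: pow_incr; split; [exact: Rlt_le (exp_pos 1) | exact: exp_le_3].
lra.
Qed.

Lemma sample_size_le x L mu : 0 < x -> 8 <= L -> L ^ 2 / sqrt x <= mu ->
  384 * L / mu ^ 2 <= x.
Proof.
move=> x_pos L_ge8 mu_ge.
have sqrt_x_pos : 0 < sqrt x by apply: sqrt_lt_R0.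
have mu_pos : 0 < mu by apply: Rlt_le_trans mu_ge; apply: Rdiv_lt_0_compat; nra.
have mu2_ge : L ^ 4 / x <= mu ^ 2.
  have -> : L ^ 4 / x = (L ^ 2 / sqrt x) ^ 2.
    have sqrt_sq : sqrt x * sqrt x = x by apply: sqrt_sqrt; lra.
    by rewrite -{1}sqrt_sq; field; lra.
  by apply: pow_incr; split; [apply/Rlt_le/Rdiv_lt_0_compat; nra |].
have L3_ge : 384 <= L ^ 3 by nra.
apply: (Rmult_le_reg_r (mu ^ 2)); first nra.
rewrite /Rdiv Rmult_assoc Rinv_l; last nra.
have : x * (L ^ 4 / x) <= x * mu ^ 2 by apply: Rmult_le_compat_l; lra.
have -> : x * (L ^ 4 / x) = L ^ 4 by field; lra.
nra.
Qed.

Lemma failure_prob_lt1 x b b' : 3 <= x -> 3 * ln x <= b -> 3 * ln x <= b' ->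
  4 * x * exp (- b) + 2 * exp (- b') < 1.
Proof.
move=> x_ge3 b_ge b'_ge.
have x3_pos : 0 < x ^ 3 by apply: pow_lt; lra.
have exp_le c : 3 * ln x <= c -> exp (- c) <= / x ^ 3.
  move=> c_ge; have -> : x ^ 3 = exp (3 * ln x).
    by rewrite (_ : 3 * ln x = ln x + (ln x + ln x)) ?exp_plus ?exp_ln /=; [ring | lra | ring].
  by rewrite -exp_Ropp; apply: exp_le_exp; lra.
have eb := exp_le _ b_ge; have eb' := exp_le _ b'_ge.
have : (4 * x + 2) * / x ^ 3 < 1.
  by apply: (Rmult_lt_reg_r (x ^ 3)) => //; field_simplify; nra.
nra.
Qed.

Lemma le_log_ratio_bound L mu : 1 < L -> 0 < mu < 1 ->
  L / mu ^ 2 <= L ^ 2 / mu ^ 2 * ((1 + ln (/ mu)) / (ln L + ln (/ mu))).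
Proof.
move=> L_gt1 mu_range.
have ln_L_pos : 0 < ln L by rewrite -ln_1; apply: ln_increasing; lra.
have ln_L_le : ln L <= L.
  by apply: Rlt_le; rewrite -{2}(ln_exp L); apply: ln_increasing; have := exp_ineq1 L; lra.
have ln_inv_mu_pos : 0 < ln (/ mu).
  by rewrite -ln_1; apply: ln_increasing; [lra | rewrite -Rinv_1; apply: Rinv_lt_contravar; lra].
have -> : L / mu ^ 2 = L ^ 2 / mu ^ 2 * / L by field; lra.
apply: Rmult_le_compat_l; first by apply: Rmult_le_pos; [nra | apply/Rlt_le/Rinv_0_lt_compat; nra].
apply: (Rmult_le_reg_r (L * (ln L + ln (/ mu)))); first nra.
by field_simplify; nra.
Qed.

Local Close Scope R_scope.

Theorem corollary5 :
  exists C : R, (0 < C)%R /\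
  exists N0 : nat, forall N : nat, prime N -> (N0 <= N)%N ->
  forall mu : R,
    (ln (INR N) ^ 2 / sqrt (INR N) <= mu)%R -> (mu < 1)%R ->
    exists T : {set 'I_N},
      (0 < #|T|)%N /\
      (fT_norm T <= mu)%R /\
      (INR #|T| <= C * (ln (INR N) ^ 2 / mu ^ 2) *
                   ((1 + ln (/ mu)) / (ln (ln (INR N)) + ln (/ mu))))%R.
Proof.
Local Open Scope R_scope.
exists 576; split; first lra.
exists 6561%nat => N _ N_large mu mu_ge mu_lt1.
have N_large' : 6561 <= INR N.
  by rewrite (_ : 6561 = INR 6561); [apply/le_INR/leP | rewrite INR_IZR_INZ].
have L_ge8 := ln_ge8 N_large'; set L := ln (INR N) in mu_ge L_ge8 *.
have mu_pos : 0 < mu.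
  by apply: Rlt_le_trans mu_ge; apply: Rdiv_lt_0_compat; [nra | apply: sqrt_lt_R0; lra].
(* Sample size [s = 384 L / mu^2]: then [(mu/4)^2 s / 8 = 3 L], making the failure probability [O(1/N^2)]. *)
set s := 384 * L / mu ^ 2.
have s_range : 0 < s <= INR N.
  by split; [apply: Rdiv_lt_0_compat; nra | apply: sample_size_le => //; lra].
have eps_range : 0 < mu / 4 <= 2 by lra.
have failure_lt1 : 4 * INR N * exp (- ((mu / 4) ^ 2 * s / 8)) + 2 * exp (- (s / 32)) < 1.
  apply: failure_prob_lt1; rewrite -/L /s; first lra.
    by right; field; lra.
  have mu2_le1 : mu ^ 2 <= 1 by nra.
  by apply: (Rmult_le_reg_r (mu ^ 2)); [nra | field_simplify; [nra | lra]].
have [T [sizeT abs_le]] := exists_small_fourier_set s_range eps_range failure_lt1.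
have T_pos : 0 < INR #|T| by move: sizeT; split_Rabs; lra.
exists T; split; first by apply/ltP/INR_lt.
split.
  apply: fT_norm_le; [exact/ltP/INR_lt | lra |] => k /abs_le; move: sizeT; split_Rabs; nra.
have := le_log_ratio_bound (ltac:(lra) : 1 < L) (conj mu_pos mu_lt1).
move: sizeT; rewrite /s; split_Rabs; lra.
Qed.
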